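(* Let $\mathcal M$ satisfy sufficient demand and let $(X^*,p^* )$ be a market equilibrium of $\mathcal M$. Then for every agent $i\in A$ and every optimal solution $(\beta_i,\gamma_i)$ of the dual of OB-LP$(i)$ at prices $p^*$, we have $\gamma_i>0$. Consequently $\sum_j p^*_jx^*_{ij}=m_i$ for every $i\in A$.
   Context: A market $\mathcal M$ consists of a finite set $A$ of agents, a finite set $G$ of divisible goods, each with supply $1$, and a finite index set $C$. Each agent $i$ has real coefficients $a_{ijk}$, requirements $r_{ik}\ge0$, delays $d_{ij}\ge 0$, budget $m_i>0$. CC$(i)$: $\sum_{j}a_{ijk}x_{ij}\ge r_{ik}$ for all $k$, $x_{ij}\ge0$. $X$ is supply respecting if $\sum_i x_{ij}\le1$ for all $j$. $(X,p)$ is a market equilibrium if $X$ is supply respecting, each $\mathbf x_i$ is an optimal solution of OB-LP$(i)$ at $p$, and $\sum_i x_{ij}<1\Rightarrow p_j=0$. OB-LP$(i)$ at prices $p$ is: minimize $\sum_j d_{ij}x_{ij}$ s.t. CC$(i)$ and $\sum_jp_jx_{ij}\le m_i$. Its dual has variables $\beta_{ik}\ge0$ ($k\in C$) for the covering constraints and $\gamma_i\ge0$ for the budget constraint: maximize $\sum_k r_{ik}\beta_{ik}-m_i\gamma_i$ s.t. $d_{ij}\ge\sum_k a_{ijk}\beta_{ik}-\gamma_ip_j$ for all $j$. $\mathcal M$ satisfies sufficient demand if for every agent $i$, every optimal solution of ''minimize $\sum_j d_{ij}x_{ij}$ s.t. CC$(i)$'' has some good $j$ with $x_{ij}>1$.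 *)

From HB Require Import structures.
From mathcomp Require Import all_boot all_order all_algebra.
Set Implicit Arguments. Unset Strict Implicit. Unset Printing Implicit Defensive.
Import Order.TTheory GRing.Theory Num.Theory.
Local Open Scope ring_scope.

(* Agents are 'I_na, goods are 'I_ng, the index set C is 'I_nc.
   a i j k = a_{ijk}, r i k = r_{ik}, d i j = d_{ij}, m i = m_i. *)

Section Market.
Variables (R : realFieldType) (na ng nc : nat).
Variables (a : 'I_na -> 'I_ng -> 'I_nc -> R) (r : 'I_na -> 'I_nc -> R)
          (d : 'I_na -> 'I_ng -> R) (m : 'I_na -> R).

Definition market_wf : Prop :=
  (forall i k, 0 <= r i k) /\ (forall i j, 0 <= d i j) /\ (forall i, 0 < m i).

Definition CC (i : 'I_na) (x : 'I_ng -> R) : Prop :=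
  (forall k, r i k <= \sum_j a i j k * x j) /\ (forall j, 0 <= x j).

Definition cost (i : 'I_na) (x : 'I_ng -> R) : R := \sum_j d i j * x j.

Definition spend (p : 'I_ng -> R) (x : 'I_ng -> R) : R := \sum_j p j * x j.

Definition OB_feasible (p : 'I_ng -> R) (i : 'I_na) (x : 'I_ng -> R) : Prop :=
  CC i x /\ spend p x <= m i.

Definition OB_optimal (p : 'I_ng -> R) (i : 'I_na) (x : 'I_ng -> R) : Prop :=
  OB_feasible p i x /\ (forall y, OB_feasible p i y -> cost i x <= cost i y).

Definition dual_feasible (p : 'I_ng -> R) (i : 'I_na)
    (beta : 'I_nc -> R) (gamma : R) : Prop :=
  (forall k, 0 <= beta k) /\ 0 <= gamma /\
  (forall j, \sum_k a i j k * beta k - gamma * p j <= d i j).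

Definition dual_obj (i : 'I_na) (beta : 'I_nc -> R) (gamma : R) : R :=
  \sum_k r i k * beta k - m i * gamma.

Definition dual_optimal (p : 'I_ng -> R) (i : 'I_na)
    (beta : 'I_nc -> R) (gamma : R) : Prop :=
  dual_feasible p i beta gamma /\
  (forall beta' gamma', dual_feasible p i beta' gamma' ->
     dual_obj i beta' gamma' <= dual_obj i beta gamma).

Definition supply_respecting (X : 'I_na -> 'I_ng -> R) : Prop :=
  forall j, \sum_i X i j <= 1.

Definition market_equilibrium (X : 'I_na -> 'I_ng -> R) (p : 'I_ng -> R) : Prop :=
  supply_respecting X /\
  (forall i, OB_optimal p i (X i)) /\
  (forall j, \sum_i X i j < 1 -> p j = 0).

Definition unconstrained_optimal (i : 'I_na) (x : 'I_ng -> R) : Prop :=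
  CC i x /\ (forall y, CC i y -> cost i x <= cost i y).

Definition sufficient_demand : Prop :=
  forall i x, unconstrained_optimal i x -> exists j, 1 < x j.

End Market.

(* At equilibrium every allocation satisfies x_ij <= 1, so by sufficient
   demand no x_i is optimal for the LP without the budget constraint.
   If agent i's budget were slack, x_i would nevertheless be such an optimum,
   since moving a little towards any cheaper point of CC(i) stays within
   budget. If some optimal dual solution had gamma_i = 0, strong LP duality
   (from Farkas' lemma, proved here by Fourier-Motzkin elimination) would make
   its objective equal to cost x_i, while (beta_i, 0) is dual feasible for the
   budget-free LP, so weak duality would again make x_i optimal there. *)

From HB Require Import structures.
From mathcomp Require Import all_boot all_order all_algebra.
From mathcomp Require Import ring lra.
Import Order.TTheory GRing.Theory Num.Theory.
Set Implicit Arguments. Unset Strict Implicit. Unset Printing Implicit Defensive.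
Local Open Scope ring_scope.

Section Farkas.
Variable R : realFieldType.

Lemma sumr_delta (I : finType) (i : I) (g : I -> R) :
  \sum_k (k == i)%:R * g k = g i.
Proof.
rewrite (bigD1 i) //= eqxx mul1r big1 ?addr0 // => k /negbTE ->.
by rewrite mul0r.
Qed.

Lemma sumr_lincomb (I J : finType) (l : J -> R) (w : J -> I -> R) (g : I -> R) :
  \sum_i (\sum_j l j * w j i) * g i = \sum_j l j * \sum_i w j i * g i.
Proof.
under eq_bigr => i _ do rewrite mulr_suml.
rewrite exchange_big; apply: eq_bigr => j _; rewrite mulr_sumr.
by apply: eq_bigr => i _; rewrite mulrA.
Qed.

Definition lin_feasible n (I : finType) (c : I -> R) (A : I -> 'I_n -> R) :=
  exists x : 'I_n -> R, forall i, 0 <= c i + \sum_v A i v * x v.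

Definition lin_certificate n (I : finType) (c : I -> R) (A : I -> 'I_n -> R) :=
  exists l : I -> R, [/\ forall i, 0 <= l i, forall v, \sum_i l i * A i v = 0
    & \sum_i l i * c i < 0].

Lemma one_var_feasible_pos (I : finType) (a g : I -> R) (i0 : I) :
  0 < a i0 ->
  (forall i, a i = 0 -> 0 <= g i) ->
  (forall p q, 0 < a p -> a q < 0 -> 0 <= - a q * g p + a p * g q) ->
  exists t, forall i, 0 <= g i + a i * t.
Proof.
move=> a_i0 g_ge0 g_pair.
(* Take the largest of the lower bounds - g p / a p on t; the pairwise
   hypothesis says that it satisfies every upper bound. *)
have [p a_p p_max] :=
  @arg_maxP _ _ _ i0 (fun p => 0 < a p) (fun p => - g p / a p) a_i0.
exists (- g p / a p) => i; case: (ltrgtP (a i) 0) => a_i.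
- have -> : g i + a i * (- g p / a p) = (- a i * g p + a p * g i) / a p.
    by field; exact: lt0r_neq0.
  by apply: divr_ge0; [exact: g_pair | exact: ltW].
- by move: (p_max i a_i); rewrite /= ler_pdivrMr // mulrC; lra.
- by rewrite a_i mul0r addr0 g_ge0.
Qed.

Lemma one_var_feasible (I : finType) (a g : I -> R) :
  (forall i, a i = 0 -> 0 <= g i) ->
  (forall p q, 0 < a p -> a q < 0 -> 0 <= - a q * g p + a p * g q) ->
  exists t, forall i, 0 <= g i + a i * t.
Proof.
move=> g_ge0 g_pair.
case: (pickP (fun i => 0 < a i)) => [i0 a_i0 | a_le0].
  exact: one_var_feasible_pos a_i0 g_ge0 g_pair.
case: (pickP (fun i => a i < 0)) => [i0 a_i0 | a_ge0].
  have [t t_sol] : exists t, forall i, 0 <= g i + - a i * t.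
    apply: (@one_var_feasible_pos _ _ _ i0) => [|i|p q] /=.
    - by rewrite oppr_gt0.
    - by move/eqP; rewrite oppr_eq0 => /eqP /g_ge0.
    - by rewrite oppr_gt0 oppr_lt0 opprK addrC => a_p a_q; exact: g_pair.
  by exists (- t) => i; rewrite mulrN -mulNr.
exists 0 => i; rewrite mulr0 addr0 g_ge0 //.
by apply/eqP; rewrite eq_le !leNgt a_le0 a_ge0.
Qed.

Section FourierMotzkin.
Variables (n : nat) (I : finType) (c : I -> R) (A : I -> 'I_n.+1 -> R).

(* Eliminate the last variable: keep each row in which it has coefficient 0
   and, for each pair of rows where it has opposite signs, the nonnegative
   combination of the two in which it cancels. *)
Definition fm_weight (j : I + I * I) (k : I) : R :=
  match j with
  | inl i => if A i ord_max == 0 then (k == i)%:R else 0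
  | inr (p, q) => if (0 < A p ord_max) && (A q ord_max < 0)
                  then - A q ord_max * (k == p)%:R + A p ord_max * (k == q)%:R
                  else 0
  end.

Definition fm_rhs j := \sum_k fm_weight j k * c k.

Definition fm_row j (v : 'I_n) := \sum_k fm_weight j k * A k (lift ord_max v).

Lemma fm_weight_ge0 j k : 0 <= fm_weight j k.
Proof.
case: j => [i|[p q]] /=; first by case: ifP => _; rewrite ?ler0n.
case: ifP => // /andP[a_p a_q].
by apply: addr_ge0; apply: mulr_ge0; rewrite ?ler0n ?oppr_ge0 ?ltW.
Qed.

Lemma fm_weight_elim j : \sum_k fm_weight j k * A k ord_max = 0.
Proof.
case: j => [i|[p q]] /=.
  case: eqP => [a_i|_]; last by rewrite big1 // => k _; rewrite mul0r.
  by rewrite sumr_delta.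
case: (_ && _); last by rewrite big1 // => k _; rewrite mul0r.
under eq_bigr => k _ do rewrite mulrDl -!mulrA.
by rewrite big_split /= -!mulr_sumr !sumr_delta; ring.
Qed.

Lemma fm_combine j (x : 'I_n -> R) :
  fm_rhs j + \sum_v fm_row j v * x v =
  \sum_k fm_weight j k * (c k + \sum_v A k (lift ord_max v) * x v).
Proof.
rewrite /fm_row; under eq_bigr => v _ do rewrite mulr_suml.
rewrite exchange_big -big_split /=; apply: eq_bigr => k _.
by rewrite mulrDr mulr_sumr; congr (_ + _); apply: eq_bigr => v _; rewrite mulrA.
Qed.

Lemma fm_feasible : lin_feasible fm_rhs fm_row -> lin_feasible c A.
Proof.
move=> [x x_sol].
pose g k := c k + \sum_v A k (lift ord_max v) * x v.
have g_comb j : 0 <= \sum_k fm_weight j k * g k by rewrite -fm_combine.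
have [t t_sol] : exists t, forall k, 0 <= g k + A k ord_max * t.
  apply: one_var_feasible => [i a_i | p q a_p a_q].
    by move: (g_comb (inl i)); rewrite /= a_i eqxx sumr_delta.
  move: (g_comb (inr (p, q))); rewrite /= a_p a_q /=.
  under eq_bigr => k _ do rewrite mulrDl -!mulrA.
  by rewrite big_split /= -!mulr_sumr !sumr_delta.
exists (fun v => if unlift ord_max v is Some v' then x v' else t) => k.
have widen_lift v : widen_ord (leqnSn n) v = lift ord_max v.
  by apply: ord_inj; rewrite lift_max.
rewrite big_ord_recr /= unlift_none addrA.
under eq_bigr => v _ do rewrite widen_lift liftK.
exact: t_sol.
Qed.

Lemma fm_certificate : lin_certificate fm_rhs fm_row -> lin_certificate c A.
Proof.
move=> [l [l_ge0 l_row l_rhs]].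
exists (fun k => \sum_j l j * fm_weight j k); split.
- by move=> k; apply: sumr_ge0 => j _; rewrite mulr_ge0 ?fm_weight_ge0.
- move=> v; rewrite sumr_lincomb; case: (unliftP ord_max v) => [v'|] ->.
    exact: l_row.
  by rewrite big1 // => j _; rewrite fm_weight_elim mulr0.
- by rewrite sumr_lincomb.
Qed.

End FourierMotzkin.

Theorem farkas n (I : finType) (c : I -> R) (A : I -> 'I_n -> R) :
  ~ lin_feasible c A -> lin_certificate c A.
Proof.
elim: n I c A => [|n IHn] I c A infeasible.
  case: (pickP (fun i => c i < 0)) => [i c_i | c_ge0].
    exists (fun k => (k == i)%:R); split => [k|[]//|]; rewrite ?ler0n //.
    by rewrite sumr_delta.
  case: infeasible; exists (fun _ => 0) => i.
  by rewrite big_ord0 addr0 leNgt c_ge0.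
apply/fm_certificate/IHn => fm_sol.
exact/infeasible/fm_feasible.
Qed.

End Farkas.

Lemma sumr_segment (R : realFieldType) (I : finType) (w x y : I -> R) t :
  \sum_j w j * (x j + t * (y j - x j)) =
  \sum_j w j * x j + t * (\sum_j w j * y j - \sum_j w j * x j).
Proof.
rewrite -sumrB mulr_sumr -big_split /=; apply: eq_bigr => j _; ring.
Qed.

Section BudgetLP.
Variables (R : realFieldType) (na ng nc : nat).
Variables (a : 'I_na -> 'I_ng -> 'I_nc -> R) (r : 'I_na -> 'I_nc -> R)
          (d : 'I_na -> 'I_ng -> R) (m : 'I_na -> R).
Variables (p : 'I_ng -> R) (i : 'I_na).

Lemma CC_dual_bound (beta : 'I_nc -> R) gamma delta y :
  (forall k, 0 <= beta k) ->
  (forall j, \sum_k a i j k * beta k - gamma * p j <= delta * d i j) ->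
  CC a r i y ->
  \sum_k r i k * beta k <= delta * cost d i y + gamma * spend p y.
Proof.
move=> beta_ge0 col [cover y_ge0].
apply: (@le_trans _ _ (\sum_k (\sum_j a i j k * y j) * beta k)).
  by apply: ler_sum => k _; apply: ler_wpM2r.
under eq_bigr => k _ do rewrite mulr_suml.
rewrite exchange_big /cost /spend !mulr_sumr -big_split /=.
apply: ler_sum => j _.
have -> : \sum_k a i j k * y j * beta k = y j * \sum_k a i j k * beta k.
  by rewrite mulr_sumr; apply: eq_bigr => k _; ring.
move: (col j) (y_ge0 j) => col_j y_j; nra.
Qed.

(* The system y >= 0, CC(i), spend p y <= m i and cost y <= t. *)
Definition ob_level_rhs (t : R) (l : 'I_ng + ('I_nc + bool)) : R :=
  match l with
  | inl _ => 0
  | inr (inl k) => - r i k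
  | inr (inr true) => m i
  | inr (inr false) => t
  end.

Definition ob_level_row (l : 'I_ng + ('I_nc + bool)) (j : 'I_ng) : R :=
  match l with
  | inl j' => (j == j')%:R
  | inr (inl k) => a i j k
  | inr (inr true) => - p j
  | inr (inr false) => - d i j
  end.

Lemma ob_level_feasible t :
  lin_feasible (ob_level_rhs t) ob_level_row ->
  exists2 y, OB_feasible a r m p i y & cost d i y <= t.
Proof.
move=> [y y_sol]; exists y; last first.
  move: (y_sol (inr (inr false))) => /=.
  by under eq_bigr do rewrite mulNr; rewrite sumrN subr_ge0.
split; first split.
- by move=> k; move: (y_sol (inr (inl k))); rewrite /= addrC subr_ge0.
- by move=> j; move: (y_sol (inl j)); rewrite /= add0r sumr_delta.
- move: (y_sol (inr (inr true))) => /=.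
  by under eq_bigr do rewrite mulNr; rewrite sumrN subr_ge0.
Qed.

Lemma ob_level_certificate t :
  (forall y, OB_feasible a r m p i y -> t < cost d i y) ->
  exists beta gb gd, [/\ forall k, 0 <= beta k, 0 <= gb, 0 <= gd,
    forall j, \sum_k a i j k * beta k - gb * p j <= gd * d i j
  & gb * m i + gd * t < \sum_k r i k * beta k].
Proof.
move=> above.
have [l [l_ge0 l_col l_rhs]] : lin_certificate (ob_level_rhs t) ob_level_row.
  by apply: farkas => /ob_level_feasible [y /above]; rewrite ltNge => /negP.
exists (fun k => l (inr (inl k))), (l (inr (inr true))), (l (inr (inr false))).
split=> // [j|].
- move: (l_col j) (l_ge0 (inl j)).
  rewrite big_sumType /= big_sumType /= big_bool /=.
  under eq_bigr => j' _ do rewrite mulrC eq_sym.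
  rewrite sumr_delta (eq_bigr _ (fun k _ => mulrC _ _)); lra.
- move: l_rhs; rewrite big_sumType /= big_sumType /= big_bool /=.
  rewrite big1 => [|j _]; last by rewrite mulr0.
  under eq_bigr => k _ do rewrite mulrN mulrC.
  rewrite sumrN; lra.
Qed.

Lemma dual_objective_above x t :
  OB_feasible a r m p i x ->
  (forall y, OB_feasible a r m p i y -> t < cost d i y) ->
  exists beta gamma, dual_feasible a d p i beta gamma /\
                     t < dual_obj r m i beta gamma.
Proof.
move=> [x_cc x_budget] /ob_level_certificate.
move=> [beta [gb [gd [beta_ge0 gb_ge0 gd_ge0 col rhs]]]].
have gd_gt0 : 0 < gd.
  rewrite lt_def gd_ge0 andbT; apply/eqP => gd0.
  have := CC_dual_bound beta_ge0 col x_cc.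
  have : gb * spend p x <= gb * m i by apply: ler_wpM2l.
  move: rhs; rewrite gd0 !mul0r; lra.
have scale (f : 'I_nc -> R) :
    \sum_k f k * (beta k / gd) = (\sum_k f k * beta k) / gd.
  by rewrite mulr_suml; apply: eq_bigr => k _; rewrite mulrA.
exists (fun k => beta k / gd), (gb / gd); split; first split.
- by move=> k; rewrite divr_ge0.
- split=> [|j]; first by rewrite divr_ge0.
  by rewrite scale mulrAC -mulrBl ler_pdivrMr // [_ * gd]mulrC col.
- by rewrite /dual_obj scale mulrA -mulrBl ltr_pdivlMr //; lra.
Qed.

Lemma dual_optimal_ge_cost x beta gamma :
  OB_optimal a r d m p i x -> dual_optimal a r d m p i beta gamma ->
  cost d i x <= dual_obj r m i beta gamma.
Proof.
move=> [x_feas x_min] [_ dual_max]; rewrite leNgt; apply/negP => obj_lt.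
have [beta' [gamma' [feas' obj_lt']]] :=
  dual_objective_above x_feas
    (fun y y_feas => lt_le_trans obj_lt (x_min y y_feas)).
by move: (dual_max _ _ feas'); rewrite leNgt obj_lt'.
Qed.

Lemma dual_optimal_gamma0_unconstrained x beta :
  OB_optimal a r d m p i x -> dual_optimal a r d m p i beta 0 ->
  unconstrained_optimal a r d i x.
Proof.
move=> x_opt beta_opt.
have cost_le := dual_optimal_ge_cost x_opt beta_opt.
have [[[x_cc _] _] [[beta_ge0 [_ col]] _]] := (x_opt, beta_opt).
split=> // y y_cc; apply: le_trans cost_le _.
have col1 j : \sum_k a i j k * beta k - 0 * p j <= 1 * d i j.
  by rewrite mul1r; exact: col.
move: (CC_dual_bound beta_ge0 col1 y_cc).
by rewrite /dual_obj mulr0 subr0 mul1r mul0r addr0.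
Qed.

Lemma CC_segment x y t :
  CC a r i x -> CC a r i y -> 0 <= t <= 1 ->
  CC a r i (fun j => x j + t * (y j - x j)).
Proof.
move=> [x_cover x_ge0] [y_cover y_ge0] /andP[t_ge0 t_le1]; split=> [k|j].
  rewrite sumr_segment; move: (x_cover k) (y_cover k); nra.
move: (x_ge0 j) (y_ge0 j); nra.
Qed.

Lemma OB_optimal_slack_unconstrained x :
  OB_optimal a r d m p i x -> spend p x < m i -> unconstrained_optimal a r d i x.
Proof.
move=> [[x_cc x_budget] x_min] slack; split=> // y y_cc.
rewrite leNgt; apply/negP => y_cheaper.
set e := spend p y - spend p x.
have [t [t_gt0 t_le1 t_budget]] :
    exists t, [/\ 0 < t, t <= 1 & t * e <= m i - spend p x].
  have [e_small|e_big] := lerP e (m i - spend p x).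
    by exists 1; rewrite ltr01 lexx mul1r.
  have e_gt0 : 0 < e by apply: le_lt_trans e_big; rewrite subr_ge0 ltW.
  exists ((m i - spend p x) / e); split; rewrite ?divfK ?gt_eqF //.
    by rewrite divr_gt0 // subr_gt0.
  by rewrite ler_pdivrMr // mul1r ltW.
have z_feas : OB_feasible a r m p i (fun j => x j + t * (y j - x j)).
  split; first by apply: CC_segment => //; rewrite (ltW t_gt0) t_le1.
  by rewrite /spend sumr_segment -/(spend p x) -/(spend p y) -/e; lra.
move: (x_min _ z_feas); rewrite /cost sumr_segment -/(cost d i x) -/(cost d i y).
have : t * (cost d i y - cost d i x) < 0 by rewrite pmulr_rlt0 // subr_lt0.
lra.
Qed.

End BudgetLP.

Section Equilibrium.
Variables (R : realFieldType) (na ng nc : nat).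
Variables (a : 'I_na -> 'I_ng -> 'I_nc -> R) (r : 'I_na -> 'I_nc -> R)
          (d : 'I_na -> 'I_ng -> R) (m : 'I_na -> R).
Variables (X : 'I_na -> 'I_ng -> R) (p : 'I_ng -> R).
Hypothesis X_eq : market_equilibrium a r d m X p.

Lemma equilibrium_alloc_le1 i j : X i j <= 1.
Proof.
have [supply [X_opt _]] := X_eq; apply: le_trans (supply j).
rewrite (bigD1 i) //= lerDl; apply: sumr_ge0 => i' _.
by have [[[_ X_ge0] _] _] := X_opt i'.
Qed.

Lemma equilibrium_not_unconstrained_optimal :
  sufficient_demand a r d -> forall i, ~ unconstrained_optimal a r d i (X i).
Proof.
move=> demand i /demand [j X_gt1].
by move: (equilibrium_alloc_le1 i j); rewrite leNgt X_gt1.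
Qed.

End Equilibrium.

Theorem lemmaE1 (R : realFieldType) (na ng nc : nat)
    (a : 'I_na -> 'I_ng -> 'I_nc -> R) (r : 'I_na -> 'I_nc -> R)
    (d : 'I_na -> 'I_ng -> R) (m : 'I_na -> R)
    (X : 'I_na -> 'I_ng -> R) (p : 'I_ng -> R) :
  market_wf r d m ->
  sufficient_demand a r d ->
  market_equilibrium a r d m X p ->
  (forall i (beta : 'I_nc -> R) (gamma : R),
     dual_optimal a r d m p i beta gamma -> 0 < gamma) /\
  (forall i, spend p (X i) = m i).
Proof.
move=> _ demand X_eq; have [_ [X_opt _]] := X_eq.
have not_unconstrained := equilibrium_not_unconstrained_optimal X_eq demand.
split=> [i beta gamma opt | i].
  have [[_ [gamma_ge0 _]] _] := opt.
  rewrite lt_def gamma_ge0 andbT; apply/eqP => gamma0.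
  move: opt; rewrite gamma0 => opt.
  exact: not_unconstrained i (dual_optimal_gamma0_unconstrained (X_opt i) opt).
have [[_ budget] _] := X_opt i.
apply/eqP; rewrite eq_le budget leNgt; apply/negP => slack.
exact: not_unconstrained i (OB_optimal_slack_unconstrained (X_opt i) slack).
Qed.
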